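(* Consider the following recursive procedure on input $(S,C,w)$, where $S$ is a path with vertex set $V$, $w:V\to\mathbb R_{\ge0}$, and $C$ is a partial coloring with domain $\mathrm{support}(w)=\{v:w(v)>0\}$: if $V\setminus\mathrm{support}(w)$ is a cover of $(S,C)$, return $X=V\setminus\mathrm{support}(w)$; otherwise choose $x,y,z\in\mathrm{support}(w)$ with $C(x)=C(z)\neq C(y)$ and $y$ between $x$ and $z$ on $S$, let $\varepsilon=\min\{w(x),w(y),w(z)\}$, let $w_1=w-\varepsilon\cdot\mathbf 1_{\{x,y,z\}}$, and return the output of the procedure on $(S,C|_{\mathrm{support}(w_1)},w_1)$. Then the procedure is well defined (whenever $V\setminus\mathrm{support}(w)$ is not a cover, such $x,y,z$ exist), terminates, and returns a cover $X$ of $(S,C)$ with $w(X)\le 3\,\mathrm{OPT}(S,C,w)$.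
   Context: A partial coloring of a tree (here a path) is convex if it can be extended to a total coloring in which every color class induces a connected subtree. A set $X\subseteq V$ is a cover of $(T,C)$ if the restriction of $C$ to $\mathrm{Domain}(C)\setminus X$ is convex. $w(X)=\sum_{v\in X}w(v)$, and $\mathrm{OPT}(T,C,w)$ is the minimum of $w(X)$ over all covers $X$ (equivalently the minimum cost of a convex recoloring). *)

From HB Require Import structures.
From mathcomp Require Import all_boot all_order all_algebra.
From mathcomp Require Import boolp.
Set Implicit Arguments. Unset Strict Implicit. Unset Printing Implicit Defensive.
Import Order.TTheory GRing.Theory Num.Theory.
Local Open Scope ring_scope.

(* The path S has vertex set V = 'I_n, with edges {i, i+1}.
   A partial coloring is C : 'I_n -> option K (None = uncolored).
   A total coloring may use the colors of K and arbitrarily many fresh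
   colors (the [nat] summand). *)

(* a set of vertices induces a connected subpath iff it is an interval *)
Definition path_connected n (P : 'I_n -> Prop) : Prop :=
  forall i j k : 'I_n, (i <= j <= k)%N -> P i -> P k -> P j.

Definition extends n (K : Type) (C : 'I_n -> option K) (f : 'I_n -> K + nat) :=
  forall v c, C v = Some c -> f v = inl c.

Definition convex n (K : Type) (C : 'I_n -> option K) : Prop :=
  exists f : 'I_n -> K + nat, extends C f /\
    forall c : K + nat, path_connected (fun v => f v = c).

Definition is_cover n (K : Type) (C : 'I_n -> option K) (X : {set 'I_n}) :=
  convex (fun v => if v \in X then None else C v).

Definition wsum (R : realFieldType) n (w : 'I_n -> R) (X : {set 'I_n}) : R :=
  \sum_(v in X) w v.

(* OPT(S,C,w) = minimum of w(X) over all covers X (setT is always a cover) *)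
Definition OPT (R : realFieldType) n (K : Type) (C : 'I_n -> option K)
    (w : 'I_n -> R) : R :=
  \big[Num.min/wsum w setT]_(X : {set 'I_n} | `[< is_cover C X >]) wsum w X.

Definition support (R : realFieldType) n (w : 'I_n -> R) : {set 'I_n} :=
  [set v | 0 < w v].

Definition zero_set (R : realFieldType) n (w : 'I_n -> R) : {set 'I_n} :=
  ~: support w.

Definition good_triple (R : realFieldType) n (K : Type)
    (C : 'I_n -> option K) (w : 'I_n -> R) (x y z : 'I_n) : Prop :=
  [/\ 0 < w x /\ 0 < w y /\ 0 < w z, C x = C z, C x <> C y &
      ((x < y < z)%N \/ (z < y < x)%N)].

Definition update_w (R : realFieldType) n (w : 'I_n -> R) (x y z : 'I_n) :
  'I_n -> R :=
  fun v => w v - (if v \in [set x; y; z]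
                  then Num.min (w x) (Num.min (w y) (w z)) else 0).

Definition restrict (R : realFieldType) n (K : Type) (C : 'I_n -> option K)
  (w1 : 'I_n -> R) : 'I_n -> option K :=
  fun v => if 0 < w1 v then C v else None.

(* one recursive step of the procedure: (w1, C1) is a possible recursive
   input for the call on (w, C) *)
Definition proc_step (R : realFieldType) n (K : Type)
    (p1 p : ('I_n -> R) * ('I_n -> option K)) : Prop :=
  let (w, C) := p in
  ~ is_cover C (zero_set w) /\
  exists x y z, good_triple C w x y z /\
    p1 = (update_w w x y z, restrict C (update_w w x y z)).

(* proc_returns w C X : the procedure on input (S, C, w) can return X *)
Inductive proc_returns (R : realFieldType) n (K : Type) :
    ('I_n -> R) -> ('I_n -> option K) -> {set 'I_n} -> Prop :=
| proc_base w C : is_cover C (zero_set w) -> proc_returns w C (zero_set w)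
| proc_rec w C x y z X :
    ~ is_cover C (zero_set w) -> good_triple C w x y z ->
    proc_returns (update_w w x y z) (restrict C (update_w w x y z)) X ->
    proc_returns w C X.

From Pilot Require Import Defs.
From Stdlib Require Import Wf_nat.
From HB Require Import structures.
From mathcomp Require Import all_boot all_order all_algebra.
From mathcomp Require Import boolp lra.
Import Order.TTheory GRing.Theory Num.Theory.
Local Open Scope ring_scope.
Set Implicit Arguments. Unset Strict Implicit. Unset Printing Implicit Defensive.

(* Local ratio.  A partial coloring of a path is convex iff it has no
   alternation: vertices x < y < z colored c, d, c with d <> c.  So when the
   procedure recurses, every cover contains one of x, y, z: subtracting eps
   from these three weights lowers OPT by at least eps while the returned set
   pays at most 3 eps for it.  Each step empties one vertex of the support,
   which gives termination. *)

Section Convexity.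
Variables (n : nat) (K : Type).
Implicit Types (C D : 'I_n -> option K).

Lemma convex_sub C D :
  (forall v c, C v = Some c -> D v = Some c) -> convex D -> convex C.
Proof. by move=> CD [f [Df f_conn]]; exists f; split=> // v c /CD /Df. Qed.

Definition alternation_free C :=
  forall (i j k : 'I_n) c d, (i <= j <= k)%N ->
    C i = Some c -> C j = Some d -> C k = Some c -> d = c.

Lemma convex_alternation_free C : convex C -> alternation_free C.
Proof.
move=> [f [Cf f_conn]] i j k c d ijk /Cf fi /Cf fj /Cf fk.
by have := f_conn (inl c) i j k ijk fi fk; rewrite fj => -[].
Qed.

Definition last_colored C (v : 'I_n) : option 'I_n :=
  if [pick u : 'I_n | isSome (C u) && (u <= v)%N] is Some u0
  then Some [arg max_(u > u0 | isSome (C u) && (u <= v)%N) (u : nat)]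
  else None.

Lemma last_colored_None C v :
  last_colored C v = None -> forall u : 'I_n, (u <= v)%N -> C u = None.
Proof.
rewrite /last_colored; case: pickP => // none _ u uv.
by move: (none u); rewrite uv andbT; case: (C u).
Qed.

Lemma last_colored_Some C (v u : 'I_n) : last_colored C v = Some u ->
  [/\ isSome (C u), (u <= v)%N &
      forall u' : 'I_n, isSome (C u') -> (u' <= v)%N -> (u' <= u)%N].
Proof.
rewrite /last_colored; case: pickP => // u0 Hu0 [<-].
case: arg_maxnP => // m /andP[Cm mv] m_max; split=> // u' Cu' u'v.
by apply: m_max; rewrite Cu' u'v.
Qed.

Lemma last_colored_id C v : isSome (C v) -> last_colored C v = Some v.
Proof.
move=> Cv; case E: (last_colored C v) => [u|]; last first.
  by move: Cv; rewrite (last_colored_None E (leqnn v)).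
have [_ uv u_max] := last_colored_Some E.
by congr Some; apply/val_inj/eqP; rewrite eqn_leq uv u_max.
Qed.

Lemma last_colored_mono C (v v' u : 'I_n) : (v <= v')%N ->
  last_colored C v = Some u ->
  exists2 u', last_colored C v' = Some u' & (u <= u')%N.
Proof.
move=> vv' /last_colored_Some[Cu uv _].
case E: (last_colored C v') => [u'|]; last first.
  by move: Cu; rewrite (last_colored_None E (leq_trans uv vv')).
have [_ _ u'_max] := last_colored_Some E.
by exists u' => //; apply: u'_max (leq_trans uv vv').
Qed.

(* Extend C by giving every vertex the color of the nearest colored vertex
   on its left; the uncolored prefix gets the fresh color [inr 0]. *)
Lemma alternation_free_convex C : alternation_free C -> convex C.
Proof.
move=> C_alt; pose g v := obind C (last_colored C v).
exists (fun v => oapp inl (inr 0%N) (g v)); split.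
  by move=> v c Cv; rewrite /g last_colored_id /= ?Cv.
move=> [c|m] i j k /andP[ij jk] /=; rewrite /g.
- case Ei: (last_colored C i) => [ui|] //=; case Ci: (C ui) => [a|] //= [<-].
  case Ek: (last_colored C k) => [uk|] //=; case Ck: (C uk) => [b|] //= [Eb].
  have [uj Ej uij] := last_colored_mono ij Ei.
  have [Cuj ujj _] := last_colored_Some Ej.
  have [_ _ uk_max] := last_colored_Some Ek.
  have ujk : (uj <= uk)%N by apply: uk_max Cuj (leq_trans ujj jk).
  rewrite Ej /=; case Cj: (C uj) Cuj => [d|] // _.
  by rewrite (C_alt ui uj uk a d) ?uij ?ujk // Ck Eb.
- case Ek: (last_colored C k) => [uk|] /=; last first.
    case Ej: (last_colored C j) => [uj|] //=.
    have [Cuj ujj _] := last_colored_Some Ej.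
    by move: Cuj; rewrite (last_colored_None Ek (leq_trans ujj jk)).
  have [Cuk _ _] := last_colored_Some Ek.
  by case: (C uk) Cuk.
Qed.

Lemma convexP C : convex C <-> alternation_free C.
Proof. by split; [apply: convex_alternation_free | apply: alternation_free_convex]. Qed.

Lemma is_coverT C : is_cover C setT.
Proof. by apply/convexP => i j k c d _; rewrite in_setT. Qed.

Lemma convex_is_cover C X : convex C -> is_cover C X.
Proof. by apply: convex_sub => v c; case: ifP. Qed.

End Convexity.

Section LocalRatioStep.
Variables (R : realFieldType) (n : nat) (w : 'I_n -> R) (x y z : 'I_n).
Hypothesis w_triple_gt0 : 0 < w x /\ 0 < w y /\ 0 < w z.

Definition triple_min := Num.min (w x) (Num.min (w y) (w z)).

Definition charge (v : 'I_n) : R :=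
  if v \in [set x; y; z] then triple_min else 0.

Lemma update_wE v : update_w w x y z v = w v - charge v.
Proof. by []. Qed.

Lemma triple_min_gt0 : 0 < triple_min.
Proof. by case: w_triple_gt0 => wx [wy wz]; rewrite !lt_min wx wy wz. Qed.

Lemma triple_min_le t : t \in [set x; y; z] -> triple_min <= w t.
Proof.
by rewrite !inE => /orP[/orP[]|] /eqP->; rewrite /triple_min !ge_min lexx ?orbT.
Qed.

Lemma triple_min_attained : exists2 t, t \in [set x; y; z] & w t = triple_min.
Proof.
rewrite /triple_min; case: (leP (w y) (w z)) => yz;
  [case: (leP (w x) (w y)) | case: (leP (w x) (w z))] => xm.
- by exists x; rewrite ?inE ?eqxx // (min_l yz) min_l.
- by exists y; rewrite ?inE ?eqxx ?orbT // (min_l yz) min_r // ltW.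
- by exists x; rewrite ?inE ?eqxx // (min_r (ltW yz)) min_l.
- by exists z; rewrite ?inE ?eqxx ?orbT // !min_r // ltW.
Qed.

Lemma charge_ge0 v : 0 <= charge v.
Proof. by rewrite /charge; case: ifP => // _; apply/ltW/triple_min_gt0. Qed.

Lemma update_w_le v : update_w w x y z v <= w v.
Proof. by rewrite update_wE lerBlDr lerDl charge_ge0. Qed.

Lemma update_w_ge0 v : 0 <= w v -> 0 <= update_w w x y z v.
Proof.
by rewrite update_wE subr_ge0 /charge; case: ifP => // /triple_min_le.
Qed.

Lemma support_update_w_proper :
  Defs.support (update_w w x y z) \proper Defs.support w.
Proof.
apply/properP; split.
  by apply/subsetP => v; rewrite !inE => /lt_le_trans; apply; apply: update_w_le.
have [t t_triple wt] := triple_min_attained.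
exists t; rewrite !inE; first by rewrite wt triple_min_gt0.
by rewrite update_wE /charge t_triple wt subrr ltxx.
Qed.

Lemma wsum_update_w (Y : {set 'I_n}) :
  wsum w Y = wsum (update_w w x y z) Y + \sum_(v in Y) charge v.
Proof.
by rewrite /wsum -big_split /=; apply: eq_bigr => v _; rewrite update_wE subrK.
Qed.

Lemma sum_charge_le (Y : {set 'I_n}) : \sum_(v in Y) charge v <= 3 * triple_min.
Proof.
apply: (@le_trans _ _ (\sum_v charge v)).
  by rewrite [leRHS](bigID (mem Y)) /= lerDl sumr_ge0 // => v _; apply: charge_ge0.
rewrite /charge -big_mkcond /= sumr_const mulr_natl ler_pMn2l ?triple_min_gt0 //.
by apply: leq_trans (leq_card_setU _ _) _; rewrite cards2 cards1; case: (_ != _).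
Qed.

Lemma sum_charge_ge (Y : {set 'I_n}) t : t \in Y -> t \in [set x; y; z] ->
  triple_min <= \sum_(v in Y) charge v.
Proof.
move=> tY t_triple; rewrite (bigD1 t) //= {1}/charge t_triple lerDl.
by apply: sumr_ge0 => v _; apply: charge_ge0.
Qed.

End LocalRatioStep.

Section Procedure.
Variables (R : realFieldType) (n : nat) (K : Type).
Implicit Types (w : 'I_n -> R) (C : 'I_n -> option K).

Definition admissible w C :=
  (forall v, 0 <= w v) /\ (forall v, C v <> None <-> 0 < w v).

Lemma admissible_step w C x y z : admissible w C -> good_triple C w x y z ->
  admissible (update_w w x y z) (restrict C (update_w w x y z)).
Proof.
move=> [w_ge0 C_dom] [w_gt0 _ _ _]; split=> [v|v].
  exact: update_w_ge0.
rewrite /restrict; case: ifP => [w1v | _]; split=> //.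
by move=> _; apply/C_dom/(lt_le_trans w1v)/update_w_le.
Qed.

Lemma good_triple_exists w C : admissible w C -> ~ is_cover C (zero_set w) ->
  exists x y z, good_triple C w x y z.
Proof.
move=> [_ C_dom] not_cover; apply: contrapT => no_triple; apply: not_cover.
apply/convex_is_cover/convexP.
move=> i j k c d /andP[ij jk] Ci Cj Ck; apply: contrapT => dc.
have neq (u v : 'I_n) : C u <> C v -> (u != v :> nat).
  by move=> Cuv; apply/eqP => /val_inj uv; rewrite uv in Cuv.
have Cij : C i <> C j by rewrite Ci Cj => -[/esym].
have Cjk : C j <> C k by rewrite Cj Ck => -[].
apply: no_triple; exists i, j, k; split.
- by do !split; apply/C_dom; rewrite ?Ci ?Cj ?Ck.
- by rewrite Ci Ck.
- exact: Cij.
- by left; rewrite !ltn_neqAle ij jk (neq _ _ Cij) (neq _ _ Cjk).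
Qed.

Lemma cover_meets_triple w C x y z (Y : {set 'I_n}) :
  (forall v, 0 < w v -> C v <> None) -> good_triple C w x y z ->
  is_cover C Y -> exists2 t, t \in Y & t \in [set x; y; z].
Proof.
move=> C_dom [[wx [wy wz]] Cxz Cxy xyz] /convex_alternation_free Y_alt.
apply: contrapT => Y_avoids.
have outY t : t \in [set x; y; z] -> t \notin Y.
  by move=> t_triple; apply/negP => tY; apply: Y_avoids; exists t.
have /outY/negbTE xY : x \in [set x; y; z] by rewrite !inE eqxx.
have /outY/negbTE yY : y \in [set x; y; z] by rewrite !inE eqxx orbT.
have /outY/negbTE zY : z \in [set x; y; z] by rewrite !inE eqxx !orbT.
case Cx: (C x) Cxz Cxy => [c|]; last by have := C_dom x wx; rewrite Cx.
case Cy: (C y) => [d|]; last by have := C_dom y wy; rewrite Cy.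
move=> Cz cd; apply: cd; congr Some; symmetry.
case: xyz => /andP[/ltnW xy /ltnW yz].
- by apply: (Y_alt x y z); rewrite ?xy ?yz ?xY ?yY ?zY -?Cz.
- by apply: (Y_alt z y x); rewrite ?xy ?yz ?xY ?yY ?zY -?Cz.
Qed.

Lemma proc_step_wf : well_founded (@proc_step R n K).
Proof.
apply: (well_founded_lt_compat _ (fun p => #|Defs.support p.1|)).
move=> [w1 C1] [w C] [_ [x [y [z [[w_gt0 _ _ _] [-> _]]]]]].
apply/ssrnat.ltP; exact: proper_card (support_update_w_proper w_gt0).
Qed.

Lemma proc_returns_exists w C : admissible w C -> exists X, proc_returns w C X.
Proof.
suff gen p : admissible p.1 p.2 -> exists X, proc_returns p.1 p.2 X.
  exact: (gen (w, C)).
elim/(well_founded_ind proc_step_wf): p {w C} => -[w C] IH /= wC.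
have [cover | not_cover] := pselect (is_cover C (zero_set w)).
  by exists (zero_set w); constructor.
have [x [y [z xyz]]] := good_triple_exists wC not_cover.
have step : proc_step (update_w w x y z, restrict C (update_w w x y z)) (w, C).
  by split=> //; exists x, y, z.
have [X HX] := IH _ step (admissible_step wC xyz).
by exists X; apply: proc_rec HX.
Qed.

Lemma proc_returns_cover w C X : proc_returns w C X ->
  zero_set w \subset X /\ is_cover C X.
Proof.
elim=> {w C X} [w C cover | w C x y z X _ [w_gt0 _ _ _] _ [zero_sub cover]].
  by split.
split.
  apply: subset_trans zero_sub; apply/subsetP => v; rewrite !inE.
  by apply: contra => /lt_le_trans; apply; apply: update_w_le.
apply: convex_sub cover => v c; case: ifP => // vX Cv.
have : v \notin zero_set (update_w w x y z) by apply: contraFN vX; apply/subsetP.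
by rewrite !inE negbK /restrict => ->.
Qed.

Lemma OPT_le C w X : is_cover C X -> OPT C w <= wsum w X.
Proof.
by move=> cover; apply: ge_bigmin_seq; [apply: mem_index_enum | apply/asboolP].
Qed.

Lemma le_OPT C w b : b <= wsum w setT ->
  (forall X, is_cover C X -> b <= wsum w X) -> b <= OPT C w.
Proof. by move=> bT b_le; apply: le_bigmin => // X /asboolP; apply: b_le. Qed.

(* Every cover of (C, w) covers the restricted instance and contains a vertex
   of the triple, so under w it pays at least [triple_min] more. *)
Lemma OPT_update_w w C x y z :
  (forall v, 0 < w v -> C v <> None) -> good_triple C w x y z ->
  OPT (restrict C (update_w w x y z)) (update_w w x y z) + triple_min w x y z
    <= OPT C w.
Proof.
move=> C_dom xyz; have [w_gt0 _ _ _] := xyz.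
have cover_bound Y : is_cover C Y -> OPT (restrict C (update_w w x y z))
    (update_w w x y z) + triple_min w x y z <= wsum w Y.
  move=> cover; rewrite (wsum_update_w w x y z Y); apply: lerD.
    apply/OPT_le/(convex_sub _ cover) => v c.
    by case: ifP => // _; rewrite /restrict; case: ifP.
  have [t tY t_triple] := cover_meets_triple C_dom xyz cover.
  exact: sum_charge_ge tY t_triple.
by apply: le_OPT => [|Y]; [apply/cover_bound/is_coverT | apply: cover_bound].
Qed.

Lemma OPT_ge0 C w : (forall v, 0 <= w v) -> 0 <= OPT C w.
Proof. by move=> w_ge0; apply: le_OPT => [|Y _]; apply: sumr_ge0. Qed.

Lemma proc_returns_approx w C X : admissible w C -> proc_returns w C X ->
  wsum w X <= 3 * OPT C w.
Proof.
move=> wC ret; elim: ret wC => {w C X} [w C _ | w C x y z X _ xyz _ IH] wC.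
  have -> : wsum w (zero_set w) = 0.
    apply: big1 => v; rewrite !inE => wv; apply/eqP.
    by rewrite eq_le leNgt wv wC.1.
  by rewrite mulr_ge0 ?OPT_ge0 //; case: wC.
have [w_gt0 _ _ _] := xyz.
have C_dom v : 0 < w v -> C v <> None by move/wC.2.
have := IH (admissible_step wC xyz).
have := sum_charge_le w_gt0 X.
have := OPT_update_w C_dom xyz.
rewrite (wsum_update_w w x y z X); lra.
Qed.

End Procedure.

Theorem mainTheorem5 (R : realFieldType) (n : nat) (K : Type)
    (C : 'I_n -> option K) (w : 'I_n -> R)
    (hw : forall v, 0 <= w v)
    (hdom : forall v, C v <> None <-> 0 < w v) :
  (forall (w' : 'I_n -> R) (C' : 'I_n -> option K),
      (forall v, 0 <= w' v) -> (forall v, C' v <> None <-> 0 < w' v) ->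
      ~ is_cover C' (zero_set w') ->
      exists x y z, good_triple C' w' x y z) /\
  Acc (@proc_step R n K) (w, C) /\
  (exists X, proc_returns w C X) /\
  (forall X, proc_returns w C X ->
     is_cover C X /\ wsum w X <= 3 * OPT C w).
Proof.
have wC : admissible w C by split.
split; first by move=> w' C' w'_ge0 C'_dom; apply: good_triple_exists.
split; first exact: proc_step_wf.
split; first exact: proc_returns_exists.
move=> X ret; split; first by case: (proc_returns_cover ret).
exact: proc_returns_approx.
Qed.
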